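(* For all integers $p,l\geq 0$ and $t>0$, $$D^{l}\left\{\frac{(1-t)^{p+1}}{t}\right\}=(-1)^{l}\sum_{s=0}^{l}\frac{(l+s)!\,(p+1)!}{2^{s}s!\,(l-s)!\,(p-l+s+1)!}\frac{(1-t)^{p-l+s+1}}{t^{l+s+1}}=(-1)^{l}l!\sum_{s=0}^{l}\frac{1}{2^{s}}\binom{p+1}{l-s}\binom{l+s}{s}\frac{(1-t)^{p-l+s+1}}{t^{l+s+1}}.$$
   Context: $D$ denotes the operator $(D\varphi)(t)=\frac{1}{t}\varphi'(t)$ acting on functions of $t$, and $D^l$ its $l$-fold iterate. Conventions: $\binom{a}{b}=0$ if $b>a$ or $b<0$, and $1/N!=0$ for negative integers $N$. *)

From HB Require Import structures.
From mathcomp Require Import all_boot all_order all_algebra.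
From mathcomp Require Import all_classical all_reals all_analysis.
Set Implicit Arguments. Unset Strict Implicit. Unset Printing Implicit Defensive.
Import Order.TTheory GRing.Theory Num.Theory.
Local Open Scope ring_scope.

Definition Dop (R : realType) (phi : R -> R) : R -> R :=
  fun t => derive1 phi t / t.

Definition Dpow (R : realType) (l : nat) (phi : R -> R) : R -> R :=
  iter l (@Dop R) phi.

Definition invfact (R : realType) (N : int) : R :=
  match N with Posz n => (n`!%:R)^-1 | Negz _ => 0 end.

(* Write y^[m] := y^m / m! for the divided powers, with the convention
   1/m! = 0 for m < 0; then (y^[m])' = y^[m-1] for EVERY integer m, and so
   D ((1-x)^[m] / x^k) = - (1-x)^[m-1] / x^(k+1) - k (1-x)^[m] / x^(k+2).
   Hence D^l ((1-x)^n / x) = (-1)^l n! sum_s B(l,s) (1-x)^[n-l+s] / x^(l+s+1)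
   by induction on l, where B(l,s) = (l+s)! / (2^s s! (l-s)!) are the
   coefficients of the Bessel polynomials: collecting terms, the induction step
   is exactly their recurrence B(l+1,s) = B(l,s) + (l+s) B(l,s-1).
   The binomial form is a rewriting of the factorials. *)
From HB Require Import structures.
From mathcomp Require Import all_boot all_order all_algebra.
From mathcomp Require Import all_classical all_reals all_analysis.
From mathcomp Require Import ring zify.
Import Order.TTheory GRing.Theory Num.Theory.
Local Open Scope ring_scope.

Section BesselExpansion.
Variable R : realType.

Lemma fact_neq0 (n : nat) : n`!%:R != 0 :> R.
Proof. by rewrite pnatr_eq0 -lt0n fact_gt0. Qed.

Lemma invfact_lt0 (N : int) : N < 0 -> invfact R N = 0.
Proof. by case: N. Qed.

Lemma invfact_nat (n : nat) : invfact R n = (n`!%:R)^-1.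
Proof. by []. Qed.

Lemma invfactB1 (N : int) : invfact R (N - 1) = N%:~R * invfact R N.
Proof.
case: N => [[|n]|n]; [by rewrite mul0r | | by rewrite [invfact _ (Negz n)]/= mulr0].
have -> : n.+1%:Z - 1 = n by rewrite -addn1 PoszD addrK.
rewrite /= factS natrM; field.
by rewrite fact_neq0 nat1r pnatr_eq0.
Qed.

Lemma binomial_invfact (n r : nat) :
  'C(n, r)%:R = n`!%:R * invfact R (n%:Z - r%:Z) / r`!%:R :> R.
Proof.
case: (leqP r n) => [rn|nr]; last first.
  by rewrite bin_small // invfact_lt0 ?mulr0 ?mul0r // subr_lt0 ltz_nat.
rewrite subzn // invfact_nat -(bin_fact rn) !natrM.
by field; rewrite !fact_neq0.
Qed.

Definition divpow (m : int) (y : R) : R := invfact R m * y ^ m.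

Lemma is_derive_divpow (m : int) (y : R) :
  is_derive y 1 (divpow m) (divpow (m - 1) y).
Proof.
case: m => [n|n]; last first.
  have -> : divpow (Negz n) = cst 0 by apply/funext => z; rewrite /divpow /= mul0r.
  by rewrite /divpow invfact_lt0 ?mul0r //; exact: is_derive_cst.
rewrite /divpow invfactB1.
have -> : (fun y : R => invfact R n * y ^ n) = invfact R n \*: (id ^+ n : R -> R).
  by apply/funext => z; rewrite /= exprfctE -exprnP.
apply: is_derive_eq.
rewrite /GRing.scale /= mulr1 mulrCA mulrA mulrC.
case: n => [|n]; first by rewrite !mul0r mulr0.
have -> : n.+1%:Z - 1 = n by rewrite -addn1 PoszD addrK.
by rewrite -exprnP mulrC.
Qed.

Definition divpow_quot (m : int) (k : nat) (x : R) : R := divpow m (1 - x) / x ^+ k.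

Lemma is_derive_divpow_quot (m : int) (k : nat) (x : R) : x != 0 ->
  is_derive x 1 (divpow_quot m k)
    (- x * (divpow_quot (m - 1) k.+1 x + k%:R * divpow_quot m k.+2 x)).
Proof.
move=> x0.
have dnum : is_derive x 1 (divpow m \o (fun y => 1 - y)) (divpow (m - 1) (1 - x) * -1).
  apply: is_derive1_comp; first exact: is_derive_divpow.
  by rewrite -[-1]add0r; apply: is_deriveB.
have dden : is_derive x 1 (fun y : R => (y ^+ k)^-1) (- k%:R / x ^+ k.+1).
  have dpow : is_derive x 1 (@GRing.exp R ^~ k) (k%:R * x ^+ k.-1).
    by split; [exact: exprn_derivable | rewrite exp_derive scaler1].
  apply: is_derive_eq.
    exact: @is_deriveV _ (@GRing.exp R ^~ k) x _ _ (expf_neq0 k x0) dpow.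
  case: k {dpow} => [|k]; first by rewrite !(mul0r, scaler0, oppr0).
  rewrite /GRing.scale /= !exprS.
  by field; rewrite x0 expf_neq0.
have -> : divpow_quot m k = (divpow m \o (fun y => 1 - y)) * (fun y => y ^- k) by [].
move: (@is_deriveM R R _ _ x 1 _ _ dnum dden) => /is_derive_eq; apply.
rewrite /divpow_quot /GRing.scale /= !exprS.
by field; rewrite x0 expf_neq0.
Qed.

Definition bessel_coef (l s : nat) : R :=
  (l + s)`!%:R / (2 ^+ s * s`!%:R) * invfact R (l%:Z - s%:Z).

Lemma bessel_coef0 (l : nat) : bessel_coef l 0 = 1.
Proof.
by rewrite /bessel_coef addn0 subr0 invfact_nat fact0 expr0 mul1r divr1 divff ?fact_neq0.
Qed.

Lemma bessel_coef_gt (l s : nat) : (l < s)%N -> bessel_coef l s = 0.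
Proof. by move=> ls; rewrite /bessel_coef invfact_lt0 ?mulr0 // subr_lt0 ltz_nat. Qed.

Lemma bessel_coefSS (l s : nat) :
  bessel_coef l.+1 s.+1 = bessel_coef l s.+1 + (l + s).+1%:R * bessel_coef l s.
Proof.
rewrite /bessel_coef.
have -> : l%:Z - s.+1%:Z = (l%:Z - s%:Z) - 1 by lia.
rewrite subzSS invfactB1 intrB -!pmulrn !addnS addSn !factS !exprS !natrM.
rewrite -(addn2 (l + s)) -(addn1 (l + s)) -(addn1 s) !natrD.
by field; rewrite fact_neq0 natr1 expf_neq0 ?pnatr_eq0.
Qed.

Definition bessel_sum (n l : nat) (x : R) : R :=
  \sum_(s < l.+1) bessel_coef l s * divpow_quot (n%:Z - l%:Z + s%:Z) (l + s).+1 x.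

Lemma bessel_sumS (n l : nat) (x : R) :
  bessel_sum n l.+1 x = \sum_(s < l.+1) bessel_coef l s *
    (divpow_quot (n%:Z - l%:Z + s%:Z - 1) (l + s).+2 x
     + (l + s).+1%:R * divpow_quot (n%:Z - l%:Z + s%:Z) (l + s).+3 x).
Proof.
pose U (s : nat) := divpow_quot (n%:Z - l%:Z + s%:Z - 1) (l + s).+2 x.
have U_shift : \sum_(s < l.+1) bessel_coef l s * U s
             = U 0 + \sum_(s < l.+1) bessel_coef l s.+1 * U s.+1.
  have -> : \sum_(s < l.+1) bessel_coef l s * U s = \sum_(s < l.+2) bessel_coef l s * U s.
    by rewrite [RHS]big_ord_recr /= bessel_coef_gt // mul0r addr0.
  by rewrite big_ord_recl bessel_coef0 mul1r.
have U_lS (s : nat) : divpow_quot (n%:Z - l.+1%:Z + s%:Z) (l.+1 + s).+1 x = U s.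
  by rewrite /U; congr divpow_quot; lia.
have U_S (s : nat) : divpow_quot (n%:Z - l%:Z + s%:Z) (l + s).+3 x = U s.+1.
  by rewrite /U; congr divpow_quot; lia.
rewrite /bessel_sum big_ord_recl bessel_coef0 mul1r /= U_lS.
under eq_bigr => s _ do rewrite /bump add1n U_lS bessel_coefSS mulrDl.
under [RHS]eq_bigr => s _ do rewrite U_S mulrDr.
rewrite !big_split /= U_shift addrA; congr (_ + _).
by apply: eq_bigr => s _; rewrite [_ * bessel_coef l s]mulrC -mulrA.
Qed.

Lemma is_derive_bessel_sum (n l : nat) (x : R) : x != 0 ->
  is_derive x 1 (bessel_sum n l) (- x * bessel_sum n l.+1 x).
Proof.
move=> x0.
have -> : bessel_sum n l =
    \sum_(s < l.+1) bessel_coef l s \*: divpow_quot (n%:Z - l%:Z + s%:Z) (l + s).+1.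
  by apply/funext => y; rewrite /bessel_sum fct_sumE.
have := @is_derive_sum R R R l.+1
  (fun s : 'I_l.+1 => bessel_coef l s \*: divpow_quot (n%:Z - l%:Z + s%:Z) (l + s).+1) x 1 _
  (fun s => is_deriveZ (bessel_coef l s)
     (is_derive_divpow_quot (n%:Z - l%:Z + s%:Z) (l + s).+1 x x0)).
move/is_derive_eq; apply.
rewrite bessel_sumS mulr_sumr; apply: eq_bigr => s _.
by rewrite /GRing.scale /= mulrCA.
Qed.

Lemma Dpow_pow_div (n l : nat) (x : R) : 0 < x ->
  Dpow l (fun y : R => (1 - y) ^+ n / y) x = (-1) ^+ l * n`!%:R * bessel_sum n l x.
Proof.
elim: l x => [|l IH] x x_gt0; have x0 : x != 0 := lt0r_neq0 x_gt0.
  rewrite /bessel_sum big_ord1 bessel_coef0 /divpow_quot /divpow subr0 addr0 invfact_nat -exprnP.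
  by rewrite /= expr0 expr1 !mul1r; field; rewrite x0 fact_neq0.
rewrite /Dpow iterS -/(Dpow l _) /Dop derive1E.
rewrite (@near_eq_derive R R^o R^o _ (fun y => (-1) ^+ l * n`!%:R * bessel_sum n l y));
  last by apply: filterS (lt_nbhsr x_gt0) => y y_gt0; exact: IH.
have D := is_deriveZ ((-1) ^+ l * n`!%:R) (is_derive_bessel_sum n l x x0).
(* [derive_val] picks up [D] by instance resolution. *)
by rewrite derive_val /GRing.scale /= exprS; field.
Qed.

Lemma fact_bessel_termE (n l s : nat) (x : R) : (s <= l)%N ->
  n`!%:R * (bessel_coef l s * divpow_quot (n%:Z - l%:Z + s%:Z) (l + s).+1 x) =
  (l + s)`!%:R * n`!%:R * ((2 ^+ s * s`!%:R * (l - s)`!%:R)^-1 * invfact R (n%:Z - l%:Z + s%:Z))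
  * ((1 - x) ^ (n%:Z - l%:Z + s%:Z) / x ^+ (l + s).+1).
Proof.
by move=> sl; rewrite /bessel_coef /divpow_quot /divpow subzn // invfact_nat !invfM; ring.
Qed.

Lemma fact_coef_binomialE (n l s : nat) : (s <= l)%N ->
  (l + s)`!%:R * n`!%:R * ((2 ^+ s * s`!%:R * (l - s)`!%:R)^-1 * invfact R (n%:Z - l%:Z + s%:Z))
  = l`!%:R * ((2 ^+ s)^-1 * 'C(n, l - s)%:R * 'C(l + s, s)%:R) :> R.
Proof.
move=> sl; rewrite !binomial_invfact.
have -> : n%:Z - (l - s)%N%:Z = n%:Z - l%:Z + s%:Z by lia.
have -> : (l + s)%N%:Z - s%:Z = l by lia.
by rewrite invfact_nat; field; rewrite !fact_neq0 expf_neq0 ?pnatr_eq0.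
Qed.
End BesselExpansion.

Theorem lemma3p2 (R : realType) (p l : nat) (t : R) (ht : 0 < t) :
  let e (s : nat) : int := (p%:Z - l%:Z + s%:Z + 1)%R in
  Dpow l (fun x : R => (1 - x) ^+ p.+1 / x) t =
    (-1) ^+ l * \sum_(0 <= s < l.+1)
      ((l + s)`!%:R * (p.+1)`!%:R * ((2 ^+ s * s`!%:R * (l - s)`!%:R)^-1 * invfact R (e s))
       * ((1 - t) ^ (e s) / t ^+ (l + s).+1))
  /\
  (-1) ^+ l * \sum_(0 <= s < l.+1)
      ((l + s)`!%:R * (p.+1)`!%:R * ((2 ^+ s * s`!%:R * (l - s)`!%:R)^-1 * invfact R (e s))
       * ((1 - t) ^ (e s) / t ^+ (l + s).+1))
  =
  (-1) ^+ l * l`!%:R * \sum_(0 <= s < l.+1)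
      ((2 ^+ s)^-1 * 'C(p.+1, l - s)%:R * 'C(l + s, s)%:R
       * ((1 - t) ^ (e s) / t ^+ (l + s).+1)).
Proof.
move=> e; have e_def (s : nat) : e s = p.+1%:Z - l%:Z + s%:Z by rewrite /e; lia.
split.
  rewrite Dpow_pow_div // -mulrA /bessel_sum big_mkord mulr_sumr; congr (_ * _).
  by apply: eq_bigr => s _; rewrite e_def fact_bessel_termE // -ltnS.
rewrite -[RHS]mulrA !big_mkord [in RHS]mulr_sumr; congr (_ * _).
by apply: eq_bigr => s _; rewrite e_def fact_coef_binomialE ?mulrA // -ltnS.
Qed.
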